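(* Let $1<w\le 2$, $h>1$, $k\ge 2$, and let $\frac12\le y_1<\dots<y_n\le h-\frac12$ be uniformly spaced with $y_{i+1}-y_i=\frac1k$ for all $i$. Let $(\mathbf x,\prec)$ be a $\frac1k$-reasonable layout of this instance and let $a\in\mathbb R$. Then there are at most $2(\log_2 k+1)$ standard bad squares $s_i$ with $y_i\in[a,a+1]$.
   Context: The instance is the strip $T=[0,w]\times[0,h]$ with the given $y_i$. A layout is a pair $(\mathbf x,\prec)$ where $\mathbf x=(x_1,\dots,x_n)$ with $x_i\in[\frac12,w-\frac12]$, and $\prec$ is a total order on the squares $s_1,\dots,s_n$, where $s_i$ is the closed axis-parallel unit square with centre $(x_i,y_i)$. If $s_i\prec s_j$ we say $s_j$ is in front of $s_i$ and $s_i$ is behind $s_j$. A point $p$ on the boundary of $s_i$ is visible if every square $s_j$ ($j\neq i$) containing $p$ is behind $s_i$, and covered otherwise. The visible perimeter of $s_i$ is the total length of its visible boundary points; the gap of $s_i$ is its visible perimeter minus $2$, the gap of a layout is the minimum gap of its squares, and a layout is $\varepsilon$-reasonable if its gap is larger than $\varepsilon$. A bad square is a square with at least two of its four corners covered; a standard bad square is a bad square one of whose vertical sides is entirely covered. *)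

From mathcomp Require Import all_boot all_order all_algebra.
From mathcomp Require Import all_classical all_reals all_analysis.
Set Implicit Arguments. Unset Strict Implicit. Unset Printing Implicit Defensive.
Import Order.TTheory GRing.Theory Num.Theory.
Local Open Scope classical_set_scope.
Local Open Scope ring_scope.

Section Layout.
Variables (R : realType) (n : nat) (x y : 'I_n -> R) (prec : rel 'I_n).
(* prec j i means s_j ≺ s_i, i.e. s_j is behind s_i. *)

Definition in_square (j : 'I_n) (p : R * R) : Prop :=
  `|p.1 - x j| <= 2^-1 /\ `|p.2 - y j| <= 2^-1.

Definition on_boundary (i : 'I_n) (p : R * R) : Prop :=
  Num.max `|p.1 - x i| `|p.2 - y i| = 2^-1.

Definition visible (i : 'I_n) (p : R * R) : Prop :=
  on_boundary i p /\ forall j, j != i -> in_square j p -> prec j i.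

Definition covered (i : 'I_n) (p : R * R) : Prop :=
  on_boundary i p /\ ~ visible i p.

Definition bottom_side (i : 'I_n) (t : R) : R * R := (x i - 2^-1 + t, y i - 2^-1).
Definition right_side (i : 'I_n) (t : R) : R * R := (x i + 2^-1, y i - 2^-1 + t).
Definition top_side (i : 'I_n) (t : R) : R * R := (x i + 2^-1 - t, y i + 2^-1).
Definition left_side (i : 'I_n) (t : R) : R * R := (x i - 2^-1, y i + 2^-1 - t).

Definition visible_on_side (i : 'I_n) (side : R -> R * R) : set R :=
  [set t : R | 0 <= t <= 1 /\ visible i (side t)].

Definition visible_perimeter (i : 'I_n) : \bar R :=
  (lebesgue_measure (visible_on_side i (bottom_side i))
   + lebesgue_measure (visible_on_side i (right_side i))
   + lebesgue_measure (visible_on_side i (top_side i))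
   + lebesgue_measure (visible_on_side i (left_side i)))%E.

Definition gap (i : 'I_n) : \bar R := (visible_perimeter i - 2%:E)%E.

(* The gap of the layout (minimum of the gaps) is larger than eps. *)
Definition reasonable (eps : R) : Prop := forall i, (eps%:E < gap i)%E.

Definition corner (i : 'I_n) (c : bool * bool) : R * R :=
  (x i + (if c.1 then 2^-1 else - 2^-1), y i + (if c.2 then 2^-1 else - 2^-1)).

Definition bad_square (i : 'I_n) : Prop :=
  exists c1 c2 : bool * bool, c1 <> c2 /\ covered i (corner i c1) /\ covered i (corner i c2).

Definition standard_bad_square (i : 'I_n) : Prop :=
  bad_square i /\
  ((forall t, 0 <= t <= 1 -> covered i (left_side i t)) \/
   (forall t, 0 <= t <= 1 -> covered i (right_side i t))).

End Layout.

Definition strict_total_order (n : nat) (prec : rel 'I_n) : Prop :=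
  (forall i, ~~ prec i i) /\
  (forall i j l, prec i j -> prec j l -> prec i l) /\
  (forall i j, i != j -> prec i j || prec j i).

From mathcomp Require Import all_boot all_order all_algebra.
From mathcomp Require Import all_classical all_reals all_analysis.
From mathcomp Require Import ring lra.
Import Order.TTheory GRing.Theory Num.Theory.
Set Implicit Arguments.
Unset Strict Implicit.
Unset Printing Implicit Defensive.
Local Open Scope classical_set_scope.
Local Open Scope ring_scope.

(* If the left side of s_i is covered, its two left corners are covered by
   squares in front of s_i whose centres lie left of x_i, so at most x_i - 1/2
   of each horizontal side of s_i is visible; as at most 1 of the right side
   is, the gap gives 1/k + 1 < 2 (x_i - 1/2).  A square s_j in front of s_i at
   vertical distance at most 1 hides all of the top or of the bottom side of
   s_i but a piece of length |x_i - x_j|, and the gap of s_i then forces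
   q_j > 2 q_i, where q_i := 3/2 - x_i + 1/k lies in [1/k, 1).  Any two squares
   are comparable in the order, so the q_i of such squares with y_i in [a, a+1]
   form a doubling chain: there are at most log2 k + 1 of them.  Squares with a
   covered right side are the mirror images under x |-> 2 - x. *)

Section DoublingChain.
Variables (R : realType) (T : finType).

Lemma doubling_max_ge (q : T -> R) (c : R) : 0 < c ->
  forall (m : nat) (S : {set T}), #|S| = m.+1 ->
  {in S, forall i, c <= q i} ->
  {in S &, forall i j, i != j -> 2 * q i < q j \/ 2 * q j < q i} ->
  exists2 i, i \in S & 2 ^+ m * c <= q i.
Proof.
move=> c_gt0; elim=> [|m IH] S cardS Sc Sdouble.
  have /card_gt0P [i iS] : (0 < #|S|)%N by rewrite cardS.
  by exists i => //; rewrite expr0 mul1r Sc.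
have /card_gt0P [i1 i1S] : (0 < #|S|)%N by rewrite cardS.
have [i0 i0S i0max] := @arg_maxP _ R T i1 (fun i => i \in S) q i1S.
have cardS' : #|S :\ i0| = m.+1 by move: cardS; rewrite (cardsD1 i0) i0S => -[].
have S'c : {in S :\ i0, forall i, c <= q i}.
  by move=> i /setD1P[_ iS]; apply: Sc.
have S'double : {in S :\ i0 &, forall i j, i != j -> 2 * q i < q j \/ 2 * q j < q i}.
  by move=> i j /setD1P[_ iS] /setD1P[_ jS]; apply: Sdouble.
have [j /setD1P[ji0 jS] qj] := IH (S :\ i0) cardS' S'c S'double.
exists i0 => //.
have qj_le : q j <= q i0 := i0max j jS.
have := Sc j jS; have : 0 < 2 ^+ m * c by rewrite mulr_gt0 // exprn_gt0.
rewrite exprS -mulrA.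
by case: (Sdouble j i0 jS i0S ji0); lra.
Qed.

Lemma card_doubling_le_log (S : {set T}) (q : T -> R) (k : R) : 1 <= k ->
  {in S, forall i, k^-1 <= q i < 1} ->
  {in S &, forall i j, i != j -> 2 * q i < q j \/ 2 * q j < q i} ->
  #|S|%:R <= ln k / ln 2 + 1.
Proof.
move=> k_ge1 Sq Sdouble.
have k_gt0 : 0 < k by lra.
have ln2_gt0 : 0 < ln (2 : R) by apply: ln_gt0; lra.
have lnk_ge0 : 0 <= ln k / ln 2.
  by apply: divr_ge0; [exact: ln_ge0 | exact: ltW].
case cardS: #|S| => [|m]; first by rewrite /=; lra.
have Sk : {in S, forall i, k^-1 <= q i} by move=> i /Sq /andP[].
have kV_gt0 : 0 < k^-1 by rewrite invr_gt0.
have [i iS qi] := doubling_max_ge kV_gt0 cardS Sk Sdouble.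
have /andP[_ qi_lt1] := Sq i iS.
have pow_lt : (2 : R) ^+ m < k.
  by rewrite -[k]mul1r -ltr_pdivrMr //; apply: le_lt_trans qi_lt1.
have : ln ((2 : R) ^+ m) <= ln k by rewrite ler_ln ?posrE ?exprn_gt0 // ltW.
by rewrite lnXn // -(@natr1 R m) lerD2r ler_pdivlMr // mulr_natl.
Qed.

End DoublingChain.

Section LebesgueBounds.
Variable R : realType.

Lemma le_lebesgue_measure (A B : set R) : A `<=` B ->
  (lebesgue_measure A <= lebesgue_measure B)%E.
Proof.
move=> AB; rewrite /lebesgue_measure /lebesgue_stieltjes_measure /measure_extension.
exact: le_mu_ext.
Qed.

Lemma lebesgue_measure_sub_itv (A : set R) (a b : R) : a <= b ->
  A `<=` [set` `[a, b]] -> (lebesgue_measure A <= (b - a)%:E)%E.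
Proof.
move=> ab Aab; apply: le_trans (le_lebesgue_measure Aab) _.
by rewrite lebesgue_measure_itv /=; case: ifP => _; rewrite lee_fin // subr_ge0.
Qed.

Lemma lebesgue_measure_far_le (A : set R) (c : R) :
  (forall t, A t -> 0 <= t <= 1 /\ 2^-1 < `|t - c|) ->
  (lebesgue_measure A <= (`|c - 2^-1|)%:E)%E.
Proof.
move=> Afar; case: (lerP 2^-1 c) => c_half.
  have Asub : A `<=` [set` `[0, c - 2^-1]].
    by move=> t /Afar[t01]; rewrite /= in_itv /= ltr_normr; lra.
  apply: le_trans (lebesgue_measure_sub_itv _ Asub) _; first by lra.
  by rewrite lee_fin; lra.
have Asub : A `<=` [set` `[c + 2^-1, 1]].
  by move=> t /Afar[t01]; rewrite /= in_itv /= ltr_normr; lra.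
apply: le_trans (lebesgue_measure_sub_itv _ Asub) _; first by lra.
by rewrite lee_fin; lra.
Qed.

End LebesgueBounds.

Section Occlusion.
Variables (R : realType) (n : nat) (x y : 'I_n -> R) (prec : rel 'I_n).

Definition occludes (j i : 'I_n) : bool := (j != i) && ~~ prec j i.

Lemma occludes_total : strict_total_order prec ->
  forall i j, i != j -> occludes i j || occludes j i.
Proof.
move=> [irr [trans tot]] i j ij.
have asym u v : prec u v -> ~~ prec v u.
  by move=> puv; apply/negP => pvu; move: (irr u); rewrite (trans _ _ _ puv pvu).
by case/orP: (tot i j ij) => p; apply/orP; [right | left];
  rewrite /occludes asym // ?andbT // eq_sym.
Qed.

Lemma covered_occluded i p : covered x y prec i p ->
  exists2 j, occludes j i & in_square x y j p.
Proof.
move=> [onb nvis]; apply: contrapT => none; apply: nvis; split=> // j ji sq.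
apply: contrapT => /negP npj; apply: none; exists j => //.
by rewrite /occludes ji.
Qed.

Lemma visible_unoccluded i j p : visible x y prec i p -> occludes j i ->
  ~ in_square x y j p.
Proof. by move=> [_ vis] /andP[ji npj] /(vis j ji); apply/negP. Qed.

Lemma visible_on_side_le1 i side :
  (lebesgue_measure (visible_on_side x y prec i side) <= 1%:E)%E.
Proof.
rewrite -[1]subr0; apply: lebesgue_measure_sub_itv => // t [t01 _].
by rewrite /= in_itv.
Qed.

Lemma covered_side_visible_le0 i side :
  (forall t, 0 <= t <= 1 -> covered x y prec i (side t)) ->
  (lebesgue_measure (visible_on_side x y prec i side) <= 0%:E)%E.
Proof.
move=> cov; rewrite (_ : visible_on_side _ _ _ _ _ = set0) ?measure0 //.
by apply/seteqP; split=> // t [t01 vis]; case: (cov t t01).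
Qed.

Lemma top_visible_le i j : occludes j i -> y i <= y j <= y i + 1 ->
  (lebesgue_measure (visible_on_side x y prec i (top_side x y i))
     <= (`|x i - x j|)%:E)%E.
Proof.
move=> occ yj; rewrite (_ : x i - x j = x i + 2^-1 - x j - 2^-1); last by ring.
apply: lebesgue_measure_far_le => t [t01 vis]; split=> //.
rewrite ltNge; apply/negP => near; apply: (visible_unoccluded vis occ).
split; rewrite /top_side /=; last by rewrite ler_norml; lra.
by move: near; rewrite !ler_norml; lra.
Qed.

Lemma bottom_visible_le i j : occludes j i -> y i - 1 <= y j <= y i ->
  (lebesgue_measure (visible_on_side x y prec i (bottom_side x y i))
     <= (`|x i - x j|)%:E)%E.
Proof.
move=> occ yj; rewrite distrC.
rewrite (_ : x j - x i = x j - x i + 2^-1 - 2^-1); last by ring.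
apply: lebesgue_measure_far_le => t [t01 vis]; split=> //.
rewrite ltNge; apply/negP => near; apply: (visible_unoccluded vis occ).
split; rewrite /bottom_side /=; last by rewrite ler_norml; lra.
by move: near; rewrite !ler_norml; lra.
Qed.

Lemma reasonable_sides_gt eps i (b r t l : R) : reasonable x y prec eps ->
  (lebesgue_measure (visible_on_side x y prec i (bottom_side x y i)) <= b%:E)%E ->
  (lebesgue_measure (visible_on_side x y prec i (right_side x y i)) <= r%:E)%E ->
  (lebesgue_measure (visible_on_side x y prec i (top_side x y i)) <= t%:E)%E ->
  (lebesgue_measure (visible_on_side x y prec i (left_side x y i)) <= l%:E)%E ->
  eps + 2 < b + r + t + l.
Proof.
move=> reas hb hr ht hl.
have : (gap x y prec i <= (b + r + t + l - 2)%:E)%E.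
  by rewrite /gap /visible_perimeter EFinB !EFinD leeB // !leeD.
by move/(lt_le_trans (reas i)); rewrite lte_fin; lra.
Qed.

Lemma vertical_side_covered_gap eps i j j' : reasonable x y prec eps ->
  (forall t, 0 <= t <= 1 -> covered x y prec i (left_side x y i t)) \/
  (forall t, 0 <= t <= 1 -> covered x y prec i (right_side x y i t)) ->
  occludes j i -> y i <= y j <= y i + 1 ->
  occludes j' i -> y i - 1 <= y j' <= y i ->
  eps + 1 < `|x i - x j| + `|x i - x j'|.
Proof.
move=> reas cov occ yj occ' yj'.
have hb := bottom_visible_le occ' yj'; have ht := top_visible_le occ yj.
have h1 := visible_on_side_le1 i.
case: cov => /covered_side_visible_le0 h0.
  by have := reasonable_sides_gt reas hb (h1 _) ht h0; lra.
by have := reasonable_sides_gt reas hb h0 ht (h1 _); lra.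
Qed.

Lemma left_covered_occluders i :
  (forall t, 0 <= t <= 1 -> covered x y prec i (left_side x y i t)) ->
  (exists2 j, occludes j i & y i <= y j <= y i + 1 /\ x j <= x i) /\
  (exists2 j, occludes j i & y i - 1 <= y j <= y i /\ x j <= x i).
Proof.
move=> cov; have t0 : 0 <= (0 : R) <= 1 by lra.
have t1 : 0 <= (1 : R) <= 1 by lra.
have [j0 occ0 [hx0 hy0]] := covered_occluded (cov 0 t0).
have [j1 occ1 [hx1 hy1]] := covered_occluded (cov 1 t1).
move: hx0 hy0 hx1 hy1; rewrite /left_side /= !ler_norml => *.
by split; [exists j0 | exists j1] => //; lra.
Qed.

Lemma right_covered_occluders i :
  (forall t, 0 <= t <= 1 -> covered x y prec i (right_side x y i t)) ->
  (exists2 j, occludes j i & y i <= y j <= y i + 1 /\ x i <= x j) /\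
  (exists2 j, occludes j i & y i - 1 <= y j <= y i /\ x i <= x j).
Proof.
move=> cov; have t0 : 0 <= (0 : R) <= 1 by lra.
have t1 : 0 <= (1 : R) <= 1 by lra.
have [j0 occ0 [hx0 hy0]] := covered_occluded (cov 0 t0).
have [j1 occ1 [hx1 hy1]] := covered_occluded (cov 1 t1).
move: hx0 hy0 hx1 hy1; rewrite /right_side /= !ler_norml => *.
by split; [exists j1 | exists j0] => //; lra.
Qed.

(* [X] is [x], or its mirror image [2 - x] for a square with covered right side. *)
Definition left_shielded (X : 'I_n -> R) (eps : R) (i : 'I_n) : Prop :=
  eps + 1 < 2 * (X i - 2^-1) /\
  forall j, occludes j i -> `|y j - y i| <= 1 -> eps + 1 < X i - X j + (X i - 2^-1).

Lemma left_shielded_of_gap (X : 'I_n -> R) eps i : 0 < eps ->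
  (forall j, 2^-1 <= X j <= 3 / 2) ->
  (exists2 j, occludes j i & y i <= y j <= y i + 1 /\ X j <= X i) ->
  (exists2 j, occludes j i & y i - 1 <= y j <= y i /\ X j <= X i) ->
  (forall j j', occludes j i -> y i <= y j <= y i + 1 ->
     occludes j' i -> y i - 1 <= y j' <= y i ->
     eps + 1 < `|X i - X j| + `|X i - X j'|) ->
  left_shielded X eps i.
Proof.
move=> eps_gt0 X_bounds [j1 occ1 [yj1 Xj1]] [j2 occ2 [yj2 Xj2]] gap.
have d1 : `|X i - X j1| = X i - X j1 by rewrite ger0_norm ?subr_ge0.
have d2 : `|X i - X j2| = X i - X j2 by rewrite ger0_norm ?subr_ge0.
have Xi := X_bounds i; have Xj1' := X_bounds j1; have Xj2' := X_bounds j2.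
split; first by have := gap _ _ occ1 yj1 occ2 yj2; rewrite d1 d2; lra.
move=> j occ; rewrite ler_norml => yj; have Xj := X_bounds j.
case: (lerP (y i) (y j)) => yij.
  have yj_top : y i <= y j <= y i + 1 by lra.
  by have := gap _ _ occ yj_top occ2 yj2; rewrite d2; case: (lerP (X j) (X i)); lra.
have yj_bot : y i - 1 <= y j <= y i by lra.
by have := gap _ _ occ1 yj1 occ yj_bot; rewrite d1; case: (lerP (X j) (X i)); lra.
Qed.

Lemma left_covered_shielded eps i : 0 < eps ->
  (forall j, 2^-1 <= x j <= 3 / 2) -> reasonable x y prec eps ->
  (forall t, 0 <= t <= 1 -> covered x y prec i (left_side x y i t)) ->
  left_shielded x eps i.
Proof.
move=> eps_gt0 x_bounds reas cov; have [top bot] := left_covered_occluders cov.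
apply: left_shielded_of_gap => // j j' occ yj occ' yj'.
exact: (vertical_side_covered_gap reas (or_introl cov) occ yj occ' yj').
Qed.

Lemma right_covered_shielded eps i : 0 < eps ->
  (forall j, 2^-1 <= x j <= 3 / 2) -> reasonable x y prec eps ->
  (forall t, 0 <= t <= 1 -> covered x y prec i (right_side x y i t)) ->
  left_shielded (fun j => 2 - x j) eps i.
Proof.
move=> eps_gt0 x_bounds reas cov.
have [[j1 occ1 [yj1 xj1]] [j2 occ2 [yj2 xj2]]] := right_covered_occluders cov.
apply: left_shielded_of_gap => //.
- by move=> j /=; have := x_bounds j; lra.
- by exists j1 => //=; split => //; lra.
- by exists j2 => //=; split => //; lra.
move=> j j' occ yj occ' yj' /=.
have reflect_dist u v : `|2 - x u - (2 - x v)| = `|x u - x v|.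
  by rewrite -normrN; congr `|_|; ring.
rewrite !reflect_dist.
exact: (vertical_side_covered_gap reas (or_intror cov) occ yj occ' yj').
Qed.

Definition shielded_window (X : 'I_n -> R) (eps a : R) : {set 'I_n} :=
  finset (fun i => `[< left_shielded X eps i >] && (a <= y i <= a + 1)).

Lemma card_shielded_window_le (X : 'I_n -> R) (k a : R) : 2 <= k ->
  strict_total_order prec -> (forall j, X j <= 3 / 2) ->
  #|shielded_window X k^-1 a|%:R <= ln k / ln 2 + 1.
Proof.
move=> k_ge2 ord X_le.
have kV_gt0 : 0 < k^-1 by rewrite invr_gt0; lra.
have kV_le1 : k^-1 <= 1 by rewrite invf_le1; lra.
apply: (card_doubling_le_log (q := fun i => 3 / 2 - X i + k^-1)); first by lra.
  by move=> i; rewrite inE => /andP[/asboolP[shield _] _]; have := X_le i; lra.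
move=> i j; rewrite !inE => /andP[/asboolP[_ shield_i] yi].
move=> /andP[/asboolP[_ shield_j] yj] ij.
have near : `|y i - y j| <= 1 /\ `|y j - y i| <= 1 by rewrite !ler_norml; lra.
case/orP: (occludes_total ord ij) => occ.
  by have := shield_j i occ near.1; lra.
by have := shield_i j occ near.2; lra.
Qed.

End Occlusion.

Theorem lemma14 (R : realType) (w h k : R) (n : nat) (x y : 'I_n -> R)
    (prec : rel 'I_n) (a : R) :
  1 < w <= 2 -> 1 < h -> 2 <= k ->
  (forall i, 2^-1 <= y i <= h - 2^-1) ->
  (forall i j : 'I_n, val j = (val i).+1 -> y j - y i = k^-1) ->
  (forall i, 2^-1 <= x i <= w - 2^-1) ->
  strict_total_order prec ->
  reasonable x y prec k^-1 ->
  (#|(finset (fun i : 'I_n => `[< standard_bad_square x y prec i /\ a <= y i <= a + 1 >]))|%:R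
     <= 2 * (ln k / ln 2 + 1) :> R).
Proof.
move=> /andP[_ w_le2] _ k_ge2 _ _ x_bounds ord reas.
have eps_gt0 : 0 < k^-1 by rewrite invr_gt0; lra.
have x_half j : 2^-1 <= x j <= 3 / 2 by have := x_bounds j; lra.
set bad := finset _.
have bad_sub : bad \subset shielded_window y prec x k^-1 a
                            :|: shielded_window y prec (fun j => 2 - x j) k^-1 a.
  apply/fintype.subsetP => i; rewrite !inE => -[[_ [covL | covR]] yi];
    rewrite yi !andbT; apply/orP; [left | right]; apply/asboolP.
    exact: left_covered_shielded.
  exact: right_covered_shielded.
have x_le j : x j <= 3 / 2 by have := x_half j; lra.
have reflected_le j : 2 - x j <= 3 / 2 by have := x_half j; lra.
have cardL := card_shielded_window_le y a k_ge2 ord x_le.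
have cardR := card_shielded_window_le y a k_ge2 ord reflected_le.
have := leq_trans (subset_leq_card bad_sub) (leq_card_setU _ _).1.
by rewrite -(ler_nat R) natrD; lra.
Qed.
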